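(* Let $K \in \mathbb{R}^{m\times n}$ and let $\phi_1,\dots,\phi_m:\mathbb{R}\to(0,\infty)$ be bounded univariate probability densities. Define $f_X:\mathbb{R}^n\to(0,\infty)$ by $f_X(x) = \prod_{i=1}^m \phi_i\big((Kx)_i\big)$ and let $N := \ker(K)$. Then: (a) $\int_{\mathbb{R}^n} f_X(x)\,\mathrm{d}x < \infty$ if and only if $N = \{0\}$; (b) regardless of whether $K$ is injective, $\int_{N^\perp} f_X(x)\,\mathrm{d}x < \infty$, where the integral is with respect to Lebesgue measure on the linear subspace $N^\perp$.
   Context: $N^\perp$ denotes the orthogonal complement of $N$ in $\mathbb{R}^n$ (equivalently, the span of the rows of $K$). *)

From HB Require Import structures.
From mathcomp Require Import all_boot all_order all_algebra.
From mathcomp Require Import all_classical all_reals all_analysis.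
Set Implicit Arguments. Unset Strict Implicit. Unset Printing Implicit Defensive.
Import Order.TTheory GRing.Theory Num.Theory.
Local Open Scope ring_scope.
Local Open Scope ereal_scope.

(* Vectors of R^n are row vectors 'rV[R]_n; (K x)_i is (K *m x^T) i 0. *)

(* Lebesgue integral over R^n of a (non-negative) extended-real function,
   written out as the iterated one-dimensional Lebesgue integral
   (equal to the integral w.r.t. n-dimensional Lebesgue measure for
   non-negative measurable functions, by Tonelli). *)
Fixpoint lebesgue_int_Rn (R : realType) (n : nat) : ('rV[R]_n -> \bar R) -> \bar R :=
  match n return ('rV[R]_n -> \bar R) -> \bar R with
  | 0 => fun g => g 0%R
  | n'.+1 => fun g =>
      \int[@lebesgue_measure R]_t
        lebesgue_int_Rn (fun x : 'rV[R]_n' => g (row_mx (const_mx t : 'rV[R]_1) x))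
  end.

Definition bounded_pos_density (R : realType) (phi : R -> R) : Prop :=
  [/\ measurable_fun setT phi,
      (forall t, (0 < phi t)%R),
      (exists M : R, forall t, (phi t <= M)%R) &
      \int[@lebesgue_measure R]_t (phi t)%:E = 1].

Definition fX (R : realType) (m n : nat) (K : 'M[R]_(m, n)) (phi : 'I_m -> R -> R)
  (x : 'rV[R]_n) : R :=
  (\prod_(i < m) phi i ((K *m x^T) i 0%R))%R.

(* Lebesgue measure on the subspace N^perp = row space of K, realised through
   an orthonormal basis: the rows of B : 'M_(r, n) form an orthonormal basis of
   the row space of K, and x = y *m B for y in R^r is an isometry R^r -> N^perp. *)
Definition orthonormal_basis_of_rowspace (R : realType) (m n r : nat)
  (K : 'M[R]_(m, n)) (B : 'M[R]_(r, n)) : Prop :=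
  (B *m B^T = 1%:M)%R /\ (B == K)%MS.

From HB Require Import structures.
From mathcomp Require Import all_boot all_order all_algebra.
From mathcomp Require Import all_classical all_reals all_analysis.
From mathcomp Require Import ring lra measurable_realfun.

(* (a) If K v = 0 with v <> 0, integrate coordinate by coordinate until the
   first coordinate where v does not vanish: there every slice of the integrand
   is a translate of the slice at 0, so the integral is that of a positive
   constant over R, i.e. +oo.  If K is injective, Gaussian elimination finds a
   row i0 whose first entry g is nonzero; substituting u = (K x)_i0 for the
   first coordinate gives  \int f_X = |g|^-1 \int phi_i0(u) (\int f_u) du,
   where f_u is a product of the same kind for a matrix that is again injective
   on the remaining rows, shifted by an amount depending on u.  By induction
   \int f_u is bounded uniformly in the shift, and phi_i0 has integral 1; with
   no coordinate left, every factor is bounded by sup phi.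
   (b) y |-> y B parametrizes N^perp, and K B^T is injective because the row
   space of K meets ker K only in 0, so (b) follows from (a). *)

Set Implicit Arguments.
Unset Strict Implicit.
Unset Printing Implicit Defensive.
Import Order.TTheory GRing.Theory Num.Theory.
Local Open Scope ring_scope.

Section column_elimination.
Variables (F : fieldType) (m : nat).

Definition head_col n (K : 'M[F]_(m, n.+1)) (i : 'I_m) : F :=
  lsubmx (K : 'M[F]_(m, 1 + n)) i 0.

Definition tail_cols n (K : 'M[F]_(m, n.+1)) : 'M[F]_(m, n) :=
  rsubmx (K : 'M[F]_(m, 1 + n)).

Lemma mulmx_row_mx_const n (K : 'M[F]_(m, 1 + n)) t (z : 'rV[F]_n) i :
  (K *m (row_mx (const_mx t : 'rV[F]_1) z)^T) i 0 =
  head_col K i * t + (tail_cols K *m z^T) i 0.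
Proof.
rewrite tr_row_mx -[K in K *m _]hsubmxK mul_row_col mxE.
by congr (_ + _); rewrite /head_col !mxE big_ord1 !mxE.
Qed.

Lemma row_mx_const_surj n (v : 'rV[F]_n.+1) :
  exists t (z : 'rV[F]_n), v = row_mx (const_mx t : 'rV[F]_1) z.
Proof.
exists (v 0 0), (rsubmx (v : 'rV[F]_(1 + n))); apply/rowP => j.
rewrite mxE; case: splitP => k jk; rewrite !mxE; congr (v _ _); apply: val_inj.
  by rewrite /= jk ord1.
by rewrite /= jk.
Qed.

Definition injective_on_rows n (K : 'M[F]_(m, n)) (A : {set 'I_m}) :=
  forall y : 'rV[F]_n, (forall i, i \in A -> (K *m y^T) i 0 = 0) -> y = 0.

Lemma injective_on_rows_pivot n (K : 'M[F]_(m, n.+1)) A :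
  injective_on_rows K A -> exists2 i0, i0 \in A & head_col K i0 != 0.
Proof.
move=> K_inj.
have [i0 /andP[i0A pivot_neq0]|no_pivot] :=
  pickP (fun i => (i \in A) && (head_col K i != 0)); first by exists i0.
pose e0 := row_mx (const_mx 1 : 'rV[F]_1) (0 : 'rV[F]_n).
have /rowP/(_ 0) : e0 = 0.
  apply: K_inj => i iA; rewrite mulmx_row_mx_const trmx0 mulmx0 mxE addr0 mulr1.
  by apply/eqP; move: (no_pivot i); rewrite /= iA => /negbFE.
by rewrite !mxE; case: splitP => // j _; rewrite mxE => /eqP; rewrite oner_eq0.
Qed.

Definition pivot_elim n (K : 'M[F]_(m, n.+1)) (i0 : 'I_m) : 'M[F]_(m, n) :=
  \matrix_(i, j) (tail_cols K i j - head_col K i / head_col K i0 * tail_cols K i0 j).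

Lemma pivot_elimE n (K : 'M[F]_(m, n.+1)) i0 (y : 'rV[F]_n) i :
  (pivot_elim K i0 *m y^T) i 0 =
  (tail_cols K *m y^T) i 0 - head_col K i / head_col K i0 * (tail_cols K *m y^T) i0 0.
Proof.
rewrite !mxE mulr_sumr -sumrB; apply: eq_bigr => j _.
by rewrite !mxE mulrBl mulrA.
Qed.

Lemma injective_on_rows_pivot_elim n (K : 'M[F]_(m, n.+1)) A i0 :
  injective_on_rows K A -> i0 \in A -> head_col K i0 != 0 ->
  injective_on_rows (pivot_elim K i0) (A :\ i0).
Proof.
move=> K_inj i0A pivot_neq0 y elim_y0.
pose t := - (tail_cols K *m y^T) i0 0 / head_col K i0.
have /(congr1 rsubmx) : row_mx (const_mx t : 'rV[F]_1) y = 0.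
  apply: K_inj => i iA; rewrite mulmx_row_mx_const /t.
  have [->|i_neq_i0] := eqVneq i i0; first by field.
  have := elim_y0 i; rewrite in_setD1 i_neq_i0 iA pivot_elimE => /(_ isT).
  by move=> <-; field.
by rewrite row_mxKr linear0.
Qed.

End column_elimination.

Lemma mulmx_trmx_self_eq0 (F : realDomainType) n (x : 'rV[F]_n) :
  x *m x^T = 0 -> x = 0.
Proof.
move=> /matrixP/(_ 0 0); rewrite !mxE => /eqP.
under eq_bigr do rewrite mxE -expr2.
rewrite psumr_eq0 => [/allP x_eq0|j _]; last exact: sqr_ge0.
apply/rowP => j; apply/eqP; rewrite mxE -sqrf_eq0.
exact: x_eq0 (mem_index_enum j).
Qed.

Lemma rowspace_kernel_eq0 (F : realFieldType) m n (K : 'M[F]_(m, n)) (x : 'rV[F]_n) :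
  (x <= K)%MS -> K *m x^T = 0 -> x = 0.
Proof.
move=> /submxP[z ->] Kx0; apply: mulmx_trmx_self_eq0.
by rewrite -mulmxA Kx0 mulmx0.
Qed.

Local Open Scope ereal_scope.
Local Open Scope classical_set_scope.

Lemma lebesgue_measureT (R : realType) : (@lebesgue_measure R) [set: R] = +oo.
Proof. by rewrite -set_itvNyy lebesgue_measure_itv. Qed.

Lemma integral_gt0 (R : realType) d (T : measurableType d)
    (mu : {measure set T -> \bar R}) (f : T -> \bar R) :
  mu [set: T] != 0 -> measurable_fun [set: T] f -> (forall t, 0 < f t) ->
  0 < \int[mu]_t f t.
Proof.
move=> muT0 mf f_gt0; have f_ge0 t : 0 <= f t := ltW (f_gt0 t).
rewrite lt_neqAle integral_ge0 // andbT; apply/eqP => int0.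
have [N [mN muN0 sN]] : ae_eq mu setT f (cst 0).
  apply/(ae_eq_integral_abs mu measurableT mf); rewrite int0.
  by apply: eq_integral => t _; rewrite gee0_abs.
move: muT0; rewrite -measure_le0 -muN0 le_measure ?inE //.
by move=> t _; apply: sN => /(_ I) /=; apply/eqP; rewrite gt_eqF.
Qed.

Section affine_change_of_variables.
Context {R : realType}.
Local Notation mu := (@lebesgue_measure R).
Variables (c d : R).
Hypothesis c_neq0 : c != 0%R.

Let aff (t : R) : R := (c * t + d)%R.

Lemma measurable_affine : measurable_fun [set: R] aff.
Proof. by apply: measurable_funD => //; exact: measurable_funM. Qed.

Lemma lebesgue_measure_ocitv_affine (X : set R) : ocitv X ->
  mu X = (`|c|)%:E * mu (aff @^-1` X).
Proof.
case=> -[a b] _ <-; rewrite lebesgue_measure_itv/=.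
have [c_gt0|c_le0] := ltP 0%R c.
  have -> : aff @^-1` `]a, b]%classic = `]((a - d) / c)%R, ((b - d) / c)%R]%classic.
    apply/seteqP; split=> t /=; rewrite /aff !in_itv/= ltr_pdivrMr// ler_pdivlMr//;
      by case/andP=> h1 h2; apply/andP; split; lra.
  rewrite lebesgue_measure_itv/= !lte_fin ltr_pM2r ?invr_gt0// ltrD2r.
  case: ifPn => ab; last by rewrite mule0.
  by rewrite -EFinB -EFinM gtr0_norm//; congr EFin; field; rewrite gt_eqF.
have c_lt0 : (c < 0)%R by rewrite lt_neqAle c_neq0 c_le0.
have -> : aff @^-1` `]a, b]%classic = `[((b - d) / c)%R, ((a - d) / c)%R[%classic.
  apply/seteqP; split=> t /=; rewrite /aff !in_itv/= ler_ndivrMr// ltr_ndivlMr//;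
    by case/andP=> h1 h2; apply/andP; split; lra.
rewrite lebesgue_measure_itv/= !lte_fin ltr_nM2r ?invr_lt0// ltrD2r.
case: ifPn => ab; last by rewrite mule0.
by rewrite -EFinB -EFinM ltr0_norm//; congr EFin; field.
Qed.

Lemma pushforward_affine (A : set R) : measurable A ->
  pushforward mu aff A = (`|c|^-1)%:E * mu A.
Proof.
move=> mA; pose k : {nonneg R} := NngNum (normr_ge0 c).
have := @lebesgue_measure_unique R
  (mscale k (pushforward mu (aff : measurableTypeR R -> measurableTypeR R))).
move=> /(_ measurable_affine _ A mA) ->.
  by rewrite /mscale /= muleA -EFinM mulVf ?mul1e// normr_eq0.
by move=> X ocX; rewrite /mscale/= lebesgue_measure_ocitv_affine.
Qed.

Lemma ge0_integral_affine (f : R -> \bar R) : measurable_fun setT f ->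
  (forall x, 0 <= f x) ->
  \int[mu]_t f (c * t + d)%R = (`|c|^-1)%:E * \int[mu]_u f u.
Proof.
move=> mf f_ge0; have k_ge0 : (0 <= `|c|^-1)%R by rewrite invr_ge0.
pose k : {nonneg R} := NngNum k_ge0.
transitivity (\int[mscale k mu]_u f u); last by rewrite ge0_integral_mscale.
transitivity (\int[mu]_(t in aff @^-1` setT) (f \o aff) t).
  by rewrite preimage_setT.
rewrite -(@ge0_integral_pushforward _ _ (measurableTypeR R) (measurableTypeR R) _ aff
  measurable_affine) //.
(* the measure structure of [pushforward mu aff] takes the measurability
   of [aff] as an argument, which surfaces here as a goal *)
apply: eq_measure_integral => [|maff A mA _]; first exact: measurable_affine.
exact: pushforward_affine.
Qed.

End affine_change_of_variables.

Lemma lebesgue_integral_cst_gt0 (R : realType) (C : \bar R) : 0 < C ->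
  \int[@lebesgue_measure R]_t C = +oo.
Proof.
move=> C_gt0; rewrite integral_cst //.
by move: (lebesgue_measureT R) => /= ->; rewrite muleC gt0_mulye.
Qed.

Section iterated_integral.
Context {R : realType}.
Local Notation mu := (@lebesgue_measure R).
Local Notation RR := (measurableTypeR R).

(* [jointly_measurable h] says that [(x, y_1, ..., y_n) |-> h x y] is
   measurable; the coordinates of [y] are moved one at a time into the
   parameter, in the order in which [lebesgue_int_Rn] integrates them. *)
Fixpoint jointly_measurable (n : nat) :
    forall d (X : measurableType d), (X -> 'rV[R]_n -> \bar R) -> Prop :=
  match n with
  | 0 => fun d X h => measurable_fun setT (fun x => h x 0%R)
  | n'.+1 => fun d X h => @jointly_measurable n' _ (X * RR)%type
      (fun xt y => h xt.1 (row_mx (const_mx (xt.2 : R) : 'rV[R]_1) y))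
  end.
Arguments jointly_measurable {n d X}.

Lemma jointly_measurable_slice n d (X : measurableType d)
    (h : X -> 'rV[R]_n.+1 -> \bar R) :
  jointly_measurable h ->
  jointly_measurable (fun (xt : X * RR) z =>
    h xt.1 (row_mx (const_mx (xt.2 : R) : 'rV[R]_1) z)).
Proof. by []. Qed.

Lemma lebesgue_int_Rn_ge0 n (g : 'rV[R]_n -> \bar R) :
  (forall y, 0 <= g y) -> 0 <= lebesgue_int_Rn g.
Proof.
elim: n g => [|n IH] g g_ge0 /=; first exact: g_ge0.
by apply: integral_ge0 => t _; apply: IH => y; exact: g_ge0.
Qed.

Lemma measurable_lebesgue_int_Rn n d (X : measurableType d)
    (h : X -> 'rV[R]_n -> \bar R) :
  jointly_measurable h -> (forall x y, 0 <= h x y) ->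
  measurable_fun setT (fun x => lebesgue_int_Rn (h x)).
Proof.
elim: n d X h => [//|n IH] d X h mh h_ge0 /=.
have mF := IH _ _ _ mh (fun _ _ => h_ge0 _ _).
apply: (measurable_fun_fubini_tonelli_F (m2 := mu) _ mF) => xt.
by apply: lebesgue_int_Rn_ge0 => y; exact: h_ge0.
Qed.

Lemma measurable_lebesgue_int_Rn_slice n d (X : measurableType d)
    (h : X -> 'rV[R]_n.+1 -> \bar R) x :
  jointly_measurable h -> (forall x y, 0 <= h x y) ->
  measurable_fun setT (fun t : RR =>
    lebesgue_int_Rn (fun z => h x (row_mx (const_mx (t : R) : 'rV[R]_1) z))).
Proof.
move=> mh h_ge0.
have mF := measurable_lebesgue_int_Rn (jointly_measurable_slice mh)
  (fun _ _ => h_ge0 _ _).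
exact: measurableT_comp mF (pair1_measurable x).
Qed.

Lemma jointly_measurable_comp n d (X : measurableType d) d' (Y : measurableType d')
    (h : X -> 'rV[R]_n -> \bar R) (f : Y -> X) :
  jointly_measurable h -> measurable_fun setT f ->
  jointly_measurable (fun y => h (f y)).
Proof.
elim: n d X d' Y h f => [|n IH] d X d' Y h f mh mf /=.
  exact: measurableT_comp mh mf.
apply: (IH _ _ _ _ _ (fun yt => (f yt.1, yt.2)) mh).
apply/measurable_fun_pairP; split; last exact: measurable_snd.
exact: measurableT_comp mf measurable_fst.
Qed.

Lemma jointly_measurable_integral n d (X : measurableType d)
    (h : X * RR -> 'rV[R]_n -> \bar R) :
  jointly_measurable h -> (forall x y, 0 <= h x y) ->
  jointly_measurable (fun x y => \int[mu]_t h (x, t) y).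
Proof.
elim: n d X h => [|n IH] d X h mh h_ge0 /=.
  exact: (measurable_fun_fubini_tonelli_F (m2 := mu) _ mh (fun _ => h_ge0 _ _)).
pose swap (p : (X * RR) * RR) := ((p.1.1, p.2), p.1.2).
have mswap : measurable_fun setT swap.
  apply/measurable_fun_pairP; split; last first.
    exact: measurableT_comp measurable_snd measurable_fst.
  apply/measurable_fun_pairP; split; last exact: measurable_snd.
  exact: measurableT_comp measurable_fst measurable_fst.
have mh' := jointly_measurable_comp (jointly_measurable_slice mh) mswap.
exact: IH _ _ _ mh' (fun _ _ => h_ge0 _ _).
Qed.

Lemma jointly_measurableMl n d (X : measurableType d)
    (h : X -> 'rV[R]_n -> \bar R) (w : X -> R) :
  jointly_measurable h -> measurable_fun setT w ->
  jointly_measurable (fun x y => (w x)%:E * h x y).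
Proof.
elim: n d X h w => [|n IH] d X h w mh mw /=.
  by apply: emeasurable_funM => //; exact/measurable_EFinP.
exact: IH _ _ _ (fun xt => w xt.1) mh (measurableT_comp mw measurable_fst).
Qed.

Lemma fubini_lebesgue_int_Rn n (h : RR -> 'rV[R]_n -> \bar R) :
  jointly_measurable h -> (forall t y, 0 <= h t y) ->
  \int[mu]_t lebesgue_int_Rn (h t) = lebesgue_int_Rn (fun y => \int[mu]_t h t y).
Proof.
elim: n h => [//|n IH] h mh h_ge0 /=.
pose H (p : RR * RR) :=
  lebesgue_int_Rn (fun z => h p.1 (row_mx (const_mx (p.2 : R) : 'rV[R]_1) z)).
transitivity (\int[mu]_s \int[mu]_t H (t, s)).
  apply: (fubini_tonelli (m1 := mu) (m2 := mu) H) => [|p].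
    apply: measurable_lebesgue_int_Rn (jointly_measurable_slice mh) _.
    by move=> ? ?; exact: h_ge0.
  by apply: lebesgue_int_Rn_ge0 => z; exact: h_ge0.
apply: eq_integral => s _; apply: IH => [|t y]; last exact: h_ge0.
exact: jointly_measurable_comp (jointly_measurable_slice mh) (pair2_measurable s).
Qed.

Lemma ge0_lebesgue_int_RnZl n d (X : measurableType d)
    (h : X -> 'rV[R]_n -> \bar R) x (c : R) :
  jointly_measurable h -> (forall x y, 0 <= h x y) -> (0 <= c)%R ->
  lebesgue_int_Rn (fun y => c%:E * h x y) = c%:E * lebesgue_int_Rn (h x).
Proof.
elim: n d X h x => [//|n IH] d X h x mh h_ge0 c_ge0 /=.
rewrite -ge0_integralZl_EFin //; last 2 first.
- by move=> t _; apply: lebesgue_int_Rn_ge0 => y; exact: h_ge0.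
- exact: measurable_lebesgue_int_Rn_slice.
apply: eq_integral => t _.
exact: (IH _ _ _ (x, t) (jointly_measurable_slice mh) (fun _ _ => h_ge0 _ _)).
Qed.

Lemma lebesgue_int_Rn_gt0 n d (X : measurableType d)
    (h : X -> 'rV[R]_n -> \bar R) x :
  jointly_measurable h -> (forall x y, 0 < h x y) -> 0 < lebesgue_int_Rn (h x).
Proof.
elim: n d X h x => [|n IH] d X h x mh h_gt0 /=; first exact: h_gt0.
apply: integral_gt0 => [||t].
- by move: (lebesgue_measureT R) => /= ->.
- by apply: measurable_lebesgue_int_Rn_slice => // x' y; exact: ltW.
- exact: (IH _ _ _ (x, t) (jointly_measurable_slice mh) (fun _ _ => h_gt0 _ _)).
Qed.

Lemma lebesgue_int_Rn_shift n d (X : measurableType d)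
    (h : X -> 'rV[R]_n -> \bar R) x (a : 'rV[R]_n) :
  jointly_measurable h -> (forall x y, 0 <= h x y) ->
  lebesgue_int_Rn (fun y => h x (y + a)%R) = lebesgue_int_Rn (h x).
Proof.
elim: n d X h x a => [|n IH] d X h x a mh h_ge0 /=; first by rewrite thinmx0.
have [a0 [a' ->]] := row_mx_const_surj a.
pose G t := lebesgue_int_Rn (fun z => h x (row_mx (const_mx t : 'rV[R]_1) z)).
transitivity (\int[mu]_t G (1 * t + a0)%R).
  apply: eq_integral => t _; rewrite /G mul1r.
  rewrite -(IH _ _ _ (x, (t + a0)%R : RR) a' (jointly_measurable_slice mh)) //.
  congr lebesgue_int_Rn; apply/funext => z /=; congr (h x _).
  by apply/rowP => j; rewrite !mxE; case: splitP => k _; rewrite !mxE.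
rewrite ge0_integral_affine ?oner_eq0 ?normr1 ?invr1 ?mul1e //.
- exact: measurable_lebesgue_int_Rn_slice.
- by move=> t; apply: lebesgue_int_Rn_ge0 => y; exact: h_ge0.
Qed.

End iterated_integral.

Section product_densities.
Context {R : realType}.
Local Notation mu := (@lebesgue_measure R).
Local Notation RR := (measurableTypeR R).
Variables (m : nat) (phi : 'I_m -> R -> R).
Hypothesis phi_density : forall i, bounded_pos_density (phi i).

Let measurable_phi i : measurable_fun setT (phi i).
Proof. by case: (phi_density i). Qed.

Let phi_gt0 i t : (0 < phi i t)%R.
Proof. by case: (phi_density i). Qed.

Let phi_ge0 i t : (0 <= phi i t)%R.
Proof. exact: ltW. Qed.

Let measurable_EFin_phi i : measurable_fun [set: RR] (fun u => (phi i u)%:E).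
Proof. by apply/measurable_EFinP; exact: measurable_phi. Qed.

Let integral_phi i : \int[mu]_t (phi i t)%:E = 1.
Proof. by case: (phi_density i). Qed.

Lemma phi_uniform_bound : exists2 M : R, (0 <= M)%R & forall i t, (phi i t <= M)%R.
Proof.
have /all_sig[M phi_le] i : {M : R | forall t, (phi i t <= M)%R}.
  by apply/cid; case: (phi_density i).
have M_ge0 i : (0 <= M i)%R by exact: le_trans (phi_le i 0%R).
exists (\sum_i M i)%R => [|i t]; first exact: sumr_ge0.
apply: le_trans (phi_le i t) _; rewrite (bigD1 i) //= lerDl.
exact: sumr_ge0.
Qed.

(* The shift [b] makes this family stable under fixing the first coordinate
   (see [prod_phi_row_mx]), which is what the inductions on [n] below need. *)
Definition prod_phi n (K : 'M[R]_(m, n)) (A : {set 'I_m}) (b : 'I_m -> R)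
    (y : 'rV[R]_n) : \bar R :=
  (\prod_(i in A) phi i ((K *m y^T) i 0 + b i))%:E.

Lemma prod_phi_gt0 n K A b y : 0 < @prod_phi n K A b y.
Proof. by rewrite lte_fin; apply: prodr_gt0 => i _. Qed.

Lemma prod_phi_ge0 n K A b y : 0 <= @prod_phi n K A b y.
Proof. exact: ltW (prod_phi_gt0 _ _ _ _). Qed.

Lemma prod_phi_row_mx n (K : 'M[R]_(m, n.+1)) A b t z :
  prod_phi K A b (row_mx (const_mx t : 'rV[R]_1) z) =
  prod_phi (tail_cols K) A (fun i => head_col K i * t + b i)%R z.
Proof.
rewrite /prod_phi; congr EFin; apply: eq_bigr => i _; congr (phi i).
by rewrite mulmx_row_mx_const addrA [X in (X + _)%R]addrC.
Qed.

Lemma measurable_prod_phi n d (X : measurableType d) (K : 'M[R]_(m, n)) A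
    (b : 'I_m -> X -> R) z :
  (forall i, measurable_fun setT (b i)) ->
  measurable_fun setT (fun x => prod_phi K A (b^~ x) z).
Proof.
move=> mb; apply/measurable_EFinP; under eq_fun do rewrite -big_enum.
apply: measurable_prod => i _; apply: measurableT_comp => //.
by apply: measurable_funD => //; exact: measurable_cst.
Qed.

Lemma jointly_measurable_prod_phi n d (X : measurableType d) (K : 'M[R]_(m, n))
    A (b : 'I_m -> X -> R) :
  (forall i, measurable_fun setT (b i)) ->
  jointly_measurable (fun x y => prod_phi K A (b^~ x) y).
Proof.
elim: n d X K b => [|n IH] d X K b mb /=; first exact: measurable_prod_phi.
under [fun xt y => _]eq_fun do under eq_fun do rewrite prod_phi_row_mx.
apply: IH => i; apply: measurable_funD.
  by apply: measurable_funM => //; exact: measurable_snd.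
exact: measurableT_comp (mb i) measurable_fst.
Qed.

Lemma jointly_measurable_prod_phi_cst n d (X : measurableType d)
    (K : 'M[R]_(m, n)) A b :
  jointly_measurable (fun _ : X => prod_phi K A b).
Proof.
apply: (jointly_measurable_prod_phi K A (b := fun i _ => b i)) => i.
exact: measurable_cst.
Qed.

Lemma lebesgue_int_prod_phi_gt0 n (K : 'M[R]_(m, n)) A b :
  0 < lebesgue_int_Rn (prod_phi K A b).
Proof.
have mh := @jointly_measurable_prod_phi_cst _ _ RR K A b.
exact: (lebesgue_int_Rn_gt0 (0%R : RR) mh (fun _ _ => prod_phi_gt0 _ _ _ _)).
Qed.

Lemma lebesgue_int_prod_phi_eqy n (K : 'M[R]_(m, n)) A b (v : 'rV[R]_n) :
  v != 0%R -> (K *m v^T = 0)%R -> lebesgue_int_Rn (prod_phi K A b) = +oo.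
Proof.
elim: n K b v => [|n IH] K b v v_neq0 Kv0.
  by move: v_neq0; rewrite thinmx0 eqxx.
have [v0 [v' v_eq]] := row_mx_const_surj v; rewrite {}v_eq in v_neq0 Kv0.
have Kv'E i : ((tail_cols K *m v'^T) i 0 = - (head_col K i * v0))%R.
  by apply/eqP; rewrite -addr_eq0 addrC -mulmx_row_mx_const Kv0 mxE.
pose slice t z := prod_phi K A b (row_mx (const_mx t : 'rV[R]_1) z).
suff [C C_gt0 sliceC] : exists2 C, 0 < C & forall t, lebesgue_int_Rn (slice t) = C.
  rewrite /= (eq_integral (cst C)) ?lebesgue_integral_cst_gt0 // => t _.
  exact: sliceC.
have [v0_eq0|v0_neq0] := eqVneq v0 0%R.
  exists +oo => // t; rewrite /slice; under eq_fun do rewrite prod_phi_row_mx.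
  apply: (IH _ _ v'); last first.
    by apply/matrixP => i j; rewrite ord1 Kv'E v0_eq0 mulr0 oppr0 !mxE.
  by apply: contraNneq v_neq0 => ->; rewrite v0_eq0 row_mx0.
(* every slice is a translate of the slice at [t = 0] *)
exists (lebesgue_int_Rn (prod_phi (tail_cols K) A b)) => [|t].
  exact: lebesgue_int_prod_phi_gt0.
have mh := @jointly_measurable_prod_phi_cst _ _ RR (tail_cols K) A b.
have h_ge0 (_ : RR) z : 0 <= prod_phi (tail_cols K) A b z := prod_phi_ge0 _ _ _ _.
rewrite -(lebesgue_int_Rn_shift (0%R : RR) (- (t / v0) *: v')%R mh h_ge0).
congr lebesgue_int_Rn; apply/funext => z; rewrite /slice prod_phi_row_mx.
rewrite /prod_phi; congr EFin; apply: eq_bigr => i _; congr (phi i).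
rewrite linearD /= mulmxDr [in RHS]mxE linearZ /= -scalemxAr.
by rewrite [X in _ = (_ + X + _)%R]mxE Kv'E; field.
Qed.

Definition pivot_shift n (K : 'M[R]_(m, n.+1)) (b : 'I_m -> R) (i0 : 'I_m)
    (u : R) (i : 'I_m) : R :=
  b i + head_col K i / head_col K i0 * (u - b i0).

Lemma measurable_pivot_shift n (K : 'M[R]_(m, n.+1)) b i0 i :
  measurable_fun setT (fun u => pivot_shift K b i0 u i).
Proof.
apply: measurable_funD => //; apply: measurable_funM => //.
exact: measurable_funB.
Qed.

Lemma jointly_measurable_prod_phi_pivot_shift n n' (K : 'M[R]_(m, n.+1))
    (K' : 'M[R]_(m, n')) A b i0 :
  jointly_measurable (fun u : RR => prod_phi K' A (pivot_shift K b i0 u)).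
Proof.
apply: (jointly_measurable_prod_phi _ _ (b := fun i (u : RR) => pivot_shift K b i0 u i)).
exact: measurable_pivot_shift.
Qed.

Lemma prod_phi_pivot n (K : 'M[R]_(m, n.+1)) (A : {set 'I_m}) b i0 t (z : 'rV[R]_n) :
  i0 \in A -> (head_col K i0 != 0)%R ->
  let u := (head_col K i0 * t + ((tail_cols K *m z^T) i0 0 + b i0))%R in
  prod_phi K A b (row_mx (const_mx t : 'rV[R]_1) z) =
  (phi i0 u)%:E * prod_phi (pivot_elim K i0) (A :\ i0) (pivot_shift K b i0 u) z.
Proof.
move=> i0A pivot_neq0 u; rewrite /prod_phi (bigD1 i0) //= EFinM.
congr (_ * _)%:E; first by rewrite /u mulmx_row_mx_const addrA.
apply: eq_big => [i|i _]; first by rewrite in_setD1 andbC.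
rewrite pivot_elimE /pivot_shift /u mulmx_row_mx_const; by congr (phi i); field.
Qed.

Lemma integral_prod_phi_pivot n (K : 'M[R]_(m, n.+1)) (A : {set 'I_m}) b i0
    (z : 'rV[R]_n) :
  i0 \in A -> (head_col K i0 != 0)%R ->
  \int[mu]_t prod_phi K A b (row_mx (const_mx t : 'rV[R]_1) z) =
  (`|head_col K i0|^-1)%:E * \int[mu]_u
    ((phi i0 u)%:E * prod_phi (pivot_elim K i0) (A :\ i0) (pivot_shift K b i0 u) z).
Proof.
move=> i0A pivot_neq0; under eq_integral do rewrite (@prod_phi_pivot _ K A b i0) //.
apply: ge0_integral_affine => // [|u]; last first.
  by apply: mule_ge0; [rewrite lee_fin | exact: prod_phi_ge0].
apply: emeasurable_funM; first exact: measurable_EFin_phi.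
by apply: measurable_prod_phi => i; exact: measurable_pivot_shift.
Qed.

Lemma lebesgue_int_prod_phi_pivot n (K : 'M[R]_(m, n.+1)) (A : {set 'I_m}) b i0 :
  i0 \in A -> (head_col K i0 != 0)%R ->
  lebesgue_int_Rn (prod_phi K A b) = (`|head_col K i0|^-1)%:E * \int[mu]_u
    ((phi i0 u)%:E *
       lebesgue_int_Rn (prod_phi (pivot_elim K i0) (A :\ i0) (pivot_shift K b i0 u))).
Proof.
move=> i0A pivot_neq0.
pose G (u : RR) := prod_phi (pivot_elim K i0) (A :\ i0) (pivot_shift K b i0 u).
pose H (u : RR) z := (phi i0 u)%:E * G u z.
have H_ge0 u z : 0 <= H u z by apply: mule_ge0; [rewrite lee_fin | exact: prod_phi_ge0].
have mG : jointly_measurable G := jointly_measurable_prod_phi_pivot_shift _ _ _ _ _.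
have mH : jointly_measurable H by apply: jointly_measurableMl mG _; exact: measurable_phi.
have mslices : jointly_measurable
    (fun (t : RR) z => prod_phi K A b (row_mx (const_mx t : 'rV[R]_1) z)).
  under [fun t z => _]eq_fun do under eq_fun do rewrite prod_phi_row_mx.
  by apply: jointly_measurable_prod_phi => i; exact: measurable_affine.
have mintH : jointly_measurable (fun (_ : RR) z => \int[mu]_u H u z).
  apply: (jointly_measurable_integral (h := fun p z => H p.2 z)) => //.
  exact: jointly_measurable_comp mH measurable_snd.
rewrite /= fubini_lebesgue_int_Rn //; last by move=> t z; exact: prod_phi_ge0.
transitivity (lebesgue_int_Rn (fun z => (`|head_col K i0|^-1)%:E * \int[mu]_u H u z)).
  by congr lebesgue_int_Rn; apply/funext => z; rewrite (integral_prod_phi_pivot b z i0A).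
rewrite (ge0_lebesgue_int_RnZl (0%R : RR) mintH) ?invr_ge0 //; last first.
  by move=> _ z; apply: integral_ge0 => u _.
rewrite -fubini_lebesgue_int_Rn //; congr (_ * _); apply: eq_integral => u _.
by rewrite (ge0_lebesgue_int_RnZl u mG) // => ? ?; exact: prod_phi_ge0.
Qed.

Lemma lebesgue_int_prod_phi_bounded n (K : 'M[R]_(m, n)) A :
  injective_on_rows K A ->
  exists2 C : R, (0 <= C)%R & forall b, lebesgue_int_Rn (prod_phi K A b) <= C%:E.
Proof.
have [M M_ge0 phi_le] := phi_uniform_bound.
elim: n K A => [|n IH] K A K_inj.
  exists (\prod_(i in A) M)%R => [|b]; first exact: prodr_ge0.
  by rewrite lee_fin; apply: ler_prod => i _; rewrite phi_ge0 phi_le.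
have [i0 i0A pivot_neq0] := injective_on_rows_pivot K_inj.
have [C C_ge0 le_C] := IH _ _ (injective_on_rows_pivot_elim K_inj i0A pivot_neq0).
exists (`|head_col K i0|^-1 * C)%R => [|b]; first by rewrite mulr_ge0 ?invr_ge0.
rewrite (lebesgue_int_prod_phi_pivot b i0A pivot_neq0) EFinM.
rewrite lee_wpmul2l ?lee_fin ?invr_ge0 //.
have mG :=
  @jointly_measurable_prod_phi_pivot_shift _ _ K (pivot_elim K i0) (A :\ i0) b i0.
apply: (@le_trans _ _ (\int[mu]_u ((phi i0 u)%:E * C%:E))).
  apply: ge0_le_integral => //.
  - move=> u _; apply: mule_ge0; first by rewrite lee_fin.
    by apply: lebesgue_int_Rn_ge0 => z; exact: prod_phi_ge0.
  - apply: emeasurable_funM; first exact: measurable_EFin_phi.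
    by apply: measurable_lebesgue_int_Rn mG _ => u z; exact: prod_phi_ge0.
  - exact: emeasurable_funM (measurable_EFin_phi i0) (measurable_cst _).
  - by move=> u _; rewrite lee_wpmul2l ?lee_fin.
by rewrite ge0_integralZr ?integral_phi ?mul1e // => u _; rewrite lee_fin.
Qed.

Lemma fX_prod_phi n (K : 'M[R]_(m, n)) :
  (fun x => (fX K phi x)%:E) = prod_phi K [set: 'I_m]%SET (fun _ => 0%R).
Proof.
apply/funext => x; rewrite /fX /prod_phi; congr EFin.
by apply: eq_big => [i|i _]; rewrite ?finset.in_setT ?addr0.
Qed.

Lemma lebesgue_int_fX_lty n (K : 'M[R]_(m, n)) :
  (forall x : 'rV[R]_n, (K *m x^T = 0)%R -> x = 0%R) ->
  lebesgue_int_Rn (fun x => (fX K phi x)%:E) < +oo.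
Proof.
move=> K_inj; have [|C _ le_C] := @lebesgue_int_prod_phi_bounded n K [set: 'I_m]%SET.
  move=> y Ky0; apply: K_inj; apply/matrixP => i j.
  by rewrite ord1 [RHS]mxE Ky0 ?finset.in_setT.
by rewrite fX_prod_phi (le_lt_trans (le_C _)) ?ltry.
Qed.

Lemma lebesgue_int_fX_eqy n (K : 'M[R]_(m, n)) (x : 'rV[R]_n) :
  x != 0%R -> (K *m x^T = 0)%R -> lebesgue_int_Rn (fun x => (fX K phi x)%:E) = +oo.
Proof. by rewrite fX_prod_phi; exact: lebesgue_int_prod_phi_eqy. Qed.

End product_densities.

Lemma fX_mulmx (R : realType) m n r (K : 'M[R]_(m, n)) phi (B : 'M[R]_(r, n))
    (y : 'rV[R]_r) :
  fX K phi (y *m B) = fX (K *m B^T) phi y.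
Proof. by rewrite /fX trmx_mul mulmxA. Qed.

Lemma orthonormal_basis_of_rowspace_injective (R : realType) m n r
    (K : 'M[R]_(m, n)) (B : 'M[R]_(r, n)) :
  orthonormal_basis_of_rowspace K B ->
  forall y : 'rV[R]_r, (K *m B^T *m y^T = 0)%R -> y = 0%R.
Proof.
move=> [BBt1 /andP[B_le_K _]] y KBy0.
have yB0 : (y *m B = 0)%R.
  apply: (rowspace_kernel_eq0 (submx_trans (submxMl y B) B_le_K)).
  by rewrite trmx_mul mulmxA.
by rewrite -[y]mulmx1 -BBt1 mulmxA yB0 mul0mx.
Qed.

Theorem proposition2p1 (R : realType) (m n : nat) (K : 'M[R]_(m, n))
  (phi : 'I_m -> R -> R) (hphi : forall i, bounded_pos_density (phi i)) :
  (lebesgue_int_Rn (fun x : 'rV[R]_n => (fX K phi x)%:E) < +oo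
     <-> (forall x : 'rV[R]_n, (K *m x^T = 0)%R -> x = 0%R))
  /\
  (forall (r : nat) (B : 'M[R]_(r, n)), orthonormal_basis_of_rowspace K B ->
     lebesgue_int_Rn (fun y : 'rV[R]_r => (fX K phi (y *m B)%R)%:E) < +oo).
Proof.
split; first split.
- move=> fX_lty x Kx0; apply/eqP; apply: contraTT fX_lty => x_neq0.
  by rewrite (lebesgue_int_fX_eqy hphi x_neq0 Kx0) ltxx.
- exact: lebesgue_int_fX_lty.
- move=> r B B_basis; under eq_fun do rewrite fX_mulmx.
  exact/(lebesgue_int_fX_lty hphi)/orthonormal_basis_of_rowspace_injective.
Qed.
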